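(* Let $\mathbb{O}$ be the real algebra of octonions with its standard basis $1,e_1,\dots,e_7$, where $e_\ell^2=-1$ for all $\ell$, $e_\ell e_m=-e_m e_\ell$ for $\ell\neq m$, and for $\ell\ne m$ the product $e_\ell e_m$ equals $\pm e_p$ for some $p$. Call an element homogeneous if it is a nonzero real multiple of a basis element. Then there is no $n\ge 1$ and no map $\sigma$ from the homogeneous elements of $\mathbb{O}$ to $\Gamma=\mathbb{Z}_2^n$ such that for all homogeneous $x,y$ one has $\sigma(xy)=\sigma(x)+\sigma(y)$ and $xy=(-1)^{\langle\sigma(x),\sigma(y)\rangle}yx$, where $\langle\cdot,\cdot\rangle$ denotes the standard scalar product on $\mathbb{Z}_2^n$. That is, $\mathbb{O}$ cannot be realized as a graded commutative algebra.
   Context: For an abelian group $\Gamma=\mathbb{Z}_2^n$, a $\Gamma$-graded commutative algebra is an algebra $A$ with a basis of homogeneous elements each assigned a degree $\sigma\in\Gamma$ such that $\sigma(xy)=\sigma(x)+\sigma(y)$ and $xy=(-1)^{\langle\sigma(x),\sigma(y)\rangle}yx$ for homogeneous $x,y$, where $\langle\cdot,\cdot\rangle$ is the standard scalar product of vectors in $\mathbb{Z}_2^n$. *)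

From HB Require Import structures.
From mathcomp Require Import all_boot all_order all_algebra.
From mathcomp Require Import reals.
Set Implicit Arguments. Unset Strict Implicit. Unset Printing Implicit Defensive.
Import Order.TTheory GRing.Theory Num.Theory.
Local Open Scope ring_scope.

(* Octonions as R^8 with basis 1 = index 0, e_1..e_7 = indices 1..7.
   Multiplication table (Fano plane with lines {a, a+1, a+3} mod 7, on the
   shifted indices 0..6): e_a e_{a+1} = e_{a+3} and cyclic. *)

Definition fano_off (d : nat) : nat :=
  match d with 1 => 3 | 2 => 6 | 3 => 1 | 4 => 5 | 5 => 4 | _ => 2 end%N.

(* negative sign iff d is a non-residue mod 7 *)
Definition fano_neg (d : nat) : bool := (d == 3) || (d == 5) || (d == 6).

(* product of basis elements p, q (indices 0..7): (negative sign?, index) *)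
Definition bmul (p q : nat) : bool * nat :=
  if p == 0%N then (false, q)
  else if q == 0%N then (false, p)
  else if p == q then (true, 0%N)
  else let i := p.-1 in let j := q.-1 in
       let d := ((j + 7 - i) %% 7)%N in
       (fano_neg d, ((i + fano_off d) %% 7).+1).

Definition octo (R : realType) := 'rV[R]_8.

Definition obasis (R : realType) (i : 'I_8) : octo R := delta_mx 0 i.

Definition omul (R : realType) (x y : octo R) : octo R :=
  \row_(k < 8) \sum_(i < 8) \sum_(j < 8)
     (if (bmul i j).2 == (k : nat)
      then (if (bmul i j).1 then -1 else 1) * x 0 i * y 0 j else 0).

Definition homogeneous (R : realType) (x : octo R) : Prop :=
  exists (c : R) (i : 'I_8), c != 0 /\ x = c *: obasis R i.

Definition sdot (n : nat) (u v : 'rV['Z_2]_n) : 'Z_2 := \sum_(k < n) u 0 k * v 0 k.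

From HB Require Import structures.
From mathcomp Require Import all_boot all_order all_algebra.
From mathcomp Require Import reals.
Import Order.TTheory GRing.Theory Num.Theory.
Local Open Scope ring_scope.

(* Distinct imaginary units anticommute, so a grading sigma must have
   <sigma e_p, sigma e_q> = 1 for all distinct p, q in 1..7.  But e_1 e_2 = e_4
   forces sigma e_4 = sigma e_1 + sigma e_2, and bilinearity of the scalar
   product then gives <sigma e_4, sigma e_3> = 1 + 1 = 0. *)

Lemma bmul_ltn {p q : nat} : (p < 8)%N -> (q < 8)%N -> ((bmul p q).2 < 8)%N.
Proof.
rewrite /bmul => p8 q8; do 3 case: ifP => // _.
by rewrite /= ltnS ltn_mod.
Qed.

Lemma bmul_anti (p q : nat) : (0 < p < 8)%N -> (0 < q < 8)%N -> p != q ->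
  bmul q p = (~~ (bmul p q).1, (bmul p q).2).
Proof.
by move: p q; do 8?[case=> //]; do 8?[case=> //].
Qed.

Section OctonionBasis.
Variable R : realType.

Definition obasis_prod (p q : 'I_8) : 'I_8 :=
  Ordinal (bmul_ltn (ltn_ord p) (ltn_ord q)).

Lemma omul_obasis (p q : 'I_8) : omul (obasis R p) (obasis R q) =
  (-1) ^+ (bmul p q).1 *: obasis R (obasis_prod p q).
Proof.
apply/rowP => k; rewrite !mxE (bigD1 p) //= [X in _ + X]big1 ?addr0 => [|i /negbTE ip]; last first.
  by apply: big1 => j _; rewrite !mxE eq_sym ip mulr0 mul0r; case: ifP.
rewrite (bigD1 q) //= [X in _ + X]big1 ?addr0 => [|j /negbTE jq]; last first.
  by rewrite !mxE eq_sym jq mulr0; case: ifP.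
rewrite !mxE !eqxx /= !mulr1 eq_sym -(inj_eq val_inj) /=.
by case: (bmul p q).1; case: ifP; rewrite ?mulr0 ?mulr1 ?expr0 ?expr1.
Qed.

Lemma obasis_neq0 (i : 'I_8) : obasis R i != 0.
Proof.
by apply/negP => /eqP/rowP/(_ i); rewrite !mxE !eqxx; apply/eqP; rewrite oner_eq0.
Qed.

Lemma obasis_homogeneous (i : 'I_8) : homogeneous (obasis R i).
Proof. by exists 1, i; rewrite oner_neq0 scale1r. Qed.

Lemma omul_obasis_neq0 (p q : 'I_8) : omul (obasis R p) (obasis R q) != 0.
Proof. by rewrite omul_obasis scaler_eq0 signr_eq0 obasis_neq0. Qed.

Lemma omul_obasis_anticomm (p q : 'I_8) : p != 0%N :> nat -> q != 0%N :> nat ->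
  p != q :> nat -> omul (obasis R q) (obasis R p) = - omul (obasis R p) (obasis R q).
Proof.
move=> p0 q0 pq; have := bmul_anti p q.
rewrite !lt0n p0 q0 !ltn_ord => /(_ isT isT pq) Eqp.
have Eprod : obasis_prod q p = obasis_prod p q by apply: val_inj; rewrite /= Eqp.
by rewrite !omul_obasis Eprod Eqp -scaleNr; case: (bmul p q).1; rewrite ?opprK.
Qed.

End OctonionBasis.

Lemma sign_of_anticomm (R : numFieldType) (V : lmodType R) (u v : V) (z : 'Z_2) :
  u = - v -> u != 0 -> u = (-1) ^+ z *: v -> z = 1.
Proof.
move=> uNv u0; case: z => -[|[|m]] z_lt //=; last by move=> _; apply/val_inj.
rewrite expr0 scale1r => uv.
have : (2%:R : R) *: v == 0 by rewrite scaler_nat mulr2n -{1}uv uNv addNr.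
by rewrite scaler_eq0 pnatr_eq0 /= => /eqP v0; move: u0; rewrite uv v0 eqxx.
Qed.

Lemma sdotDl n (u v w : 'rV['Z_2]_n) : sdot (u + v) w = sdot u w + sdot v w.
Proof. by rewrite /sdot -big_split; apply: eq_bigr => i _; rewrite mxE mulrDl. Qed.

Theorem mainTheorem2 (R : realType) (n : nat) : (1 <= n)%N ->
  ~ exists sigma : octo R -> 'rV['Z_2]_n,
      forall x y : octo R, homogeneous x -> homogeneous y ->
        sigma (omul x y) = sigma x + sigma y /\
        omul x y = (-1) ^+ (nat_of_ord (sdot (sigma x) (sigma y))) *: omul y x.
Proof.
move=> _ [sigma graded].
have gradedE p q := graded _ _ (obasis_homogeneous R p) (obasis_homogeneous R q).
have sdot_anticomm (p q : 'I_8) : p != 0%N :> nat -> q != 0%N :> nat -> p != q :> nat ->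
    sdot (sigma (obasis R q)) (sigma (obasis R p)) = 1.
  move=> p0 q0 pq; apply: sign_of_anticomm (gradedE q p).2.
  - by rewrite omul_obasis_anticomm // opprK.
  - exact: omul_obasis_neq0.
have e1e2 : omul (obasis R (inord 1)) (obasis R (inord 2)) = obasis R (inord 4).
  rewrite omul_obasis /obasis_prod; move: (bmul_ltn _ _); rewrite !inordK //= => lt8.
  by rewrite expr0 scale1r; congr (obasis R _); apply: val_inj; rewrite /= inordK.
have := sdot_anticomm (inord 3) (inord 4); rewrite !inordK // => /(_ isT isT isT).
by rewrite -e1e2 (gradedE _ _).1 sdotDl !sdot_anticomm ?inordK.
Qed.
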